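(* Let $a,b,c,k,m>0$ and consider the system $$\frac{dx}{dt}=bx(1-x-cy),\qquad \frac{dy}{dt}=y\Big(\frac{1}{1+kx}-y-ax-mxy\Big).$$ Suppose $0<c<1$ and $0<k<\frac1a-1$. Then the locally stable positive equilibrium $E_{2*}=(x^*,y^* )$ (with $x^*,y^*>0$) of the system is globally stable, i.e. every solution with $x(0)>0$, $y(0)>0$ converges to $E_{2*}$ as $t\to\infty$.
   Context: All parameters are positive. A positive equilibrium is an equilibrium with both coordinates positive; $E_{2*}$ denotes the positive equilibrium that is a stable node. *)

From Stdlib Require Import Reals.
From Coquelicot Require Import Coquelicot.
Open Scope R_scope.

Definition fx (a b c k m x y : R) : R := b * x * (1 - x - c * y).
Definition fy (a b c k m x y : R) : R :=
  y * (/ (1 + k * x) - y - a * x - m * x * y).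

Definition pos_equilibrium (a b c k m xs ys : R) : Prop :=
  0 < xs /\ 0 < ys /\ fx a b c k m xs ys = 0 /\ fy a b c k m xs ys = 0.

Definition J11 (a b c k m x y : R) : R := b * (1 - x - c * y) - b * x.
Definition J12 (a b c k m x y : R) : R := - b * c * x.
Definition J21 (a b c k m x y : R) : R :=
  y * (- k / (1 + k * x) ^ 2 - a - m * y).
Definition J22 (a b c k m x y : R) : R :=
  (/ (1 + k * x) - y - a * x - m * x * y) + y * (- 1 - m * x).

(* Stable node: both eigenvalues of the Jacobian are real and negative,
   i.e. the characteristic polynomial l^2 - tr l + det has two real
   negative roots l1, l2 (counted with multiplicity). *)
Definition stable_node (a b c k m xs ys : R) : Prop :=
  exists l1 l2 : R, l1 < 0 /\ l2 < 0 /\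
    l1 + l2 = J11 a b c k m xs ys + J22 a b c k m xs ys /\
    l1 * l2 = J11 a b c k m xs ys * J22 a b c k m xs ys
              - J12 a b c k m xs ys * J21 a b c k m xs ys.

Definition is_solution (a b c k m : R) (x y : R -> R) : Prop :=
  (forall t, 0 < t -> is_derive x t (fx a b c k m (x t) (y t))) /\
  (forall t, 0 < t -> is_derive y t (fy a b c k m (x t) (y t))) /\
  filterlim x (at_right 0) (locally (x 0)) /\
  filterlim y (at_right 0) (locally (y 0)).

From Stdlib Require Import Reals Lra Classical.
From Coquelicot Require Import Coquelicot.
Open Scope R_scope.

(* Write the system as x' = b x gx, y' = y gy with per-capita rates
   gx = 1 - x - c y and gy = 1/(1 + k x) - y - a x - m x y.  Along a solution
   the pair (gx, -gy) satisfies a linear system whose off-diagonal coefficients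
   c y and b x (k/(1 + k x)^2 + a + m y) are nonnegative.  Such a cooperative
   system keeps both closed quadrants {gx >= 0, gy <= 0} and {gx <= 0, gy >= 0}
   invariant, and outside them gx never vanishes; so gx and gy eventually have
   constant signs, x and y are eventually monotone and bounded, hence converge.
   At the limit each rate is <= 0, and is 0 for a surviving species.  Because
   c < 1 and a (1 + k) < 1 no point on the axes passes this test, and the
   positive equilibrium is unique, so the limit is E2*. *)

(** * Calculus on the half-line *)

Lemma is_derive_continuous (f : R -> R) (t l : R) : is_derive f t l -> continuous f t.
Proof.
  intro Hd. apply (ex_derive_continuous (K := R_AbsRing) (V := R_NormedModule)).
  now exists l.
Qed.

Lemma continuous_Rplus (f g : R -> R) (t : R) : continuous f t -> continuous g t ->
  continuous (fun u => f u + g u) t.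
Proof. exact (continuous_plus f g t). Qed.

Lemma continuous_Rmult (f g : R -> R) (t : R) : continuous f t -> continuous g t ->
  continuous (fun u => f u * g u) t.
Proof. exact (continuous_mult f g t). Qed.

Lemma continuous_Rmin (f g : R -> R) (t : R) : continuous f t -> continuous g t ->
  continuous (fun u => Rmin (f u) (g u)) t.
Proof.
  intros Hf Hg.
  apply (continuous_ext (fun u => (f u + g u - Rabs (f u - g u)) / 2)).
  { intro u. unfold Rmin. destruct (Rle_dec (f u) (g u)).
    - rewrite Rabs_left1; lra.
    - rewrite Rabs_right; lra. }
  apply (continuous_scal_l (fun u => f u + g u - Rabs (f u - g u)) (/ 2)).
  apply (continuous_minus (fun u => f u + g u)); [apply continuous_Rplus; assumption|].
  apply continuous_Rabs_comp, (continuous_minus f g); assumption.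
Qed.

Lemma continuous_pos_near (f : R -> R) (t : R) : continuous f t -> 0 < f t ->
  exists d, 0 < d /\ forall s, Rabs (s - t) < d -> 0 < f s.
Proof.
  intros Hc Hpos.
  destruct (proj1 (filterlim_locally f (f t)) Hc (mkposreal _ Hpos)) as [d Hd].
  exists d; split; [apply cond_pos|]. intros s Hs.
  assert (Hball : Rabs (f s - f t) < f t) by exact (Hd s Hs).
  apply Rabs_def2 in Hball. lra.
Qed.

Lemma continuous_nonneg_of_pos_left (w : R -> R) (t0 tau : R) : t0 < tau ->
  continuous w tau -> (forall s, t0 <= s < tau -> 0 < w s) -> 0 <= w tau.
Proof.
  intros Htau Hc Hleft. apply Rnot_lt_le. intro Hneg.
  destruct (continuous_pos_near (fun u => - w u) tau (continuous_opp w tau Hc) ltac:(lra))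
    as [d [Hd Hnear]].
  set (s := Rmax t0 (tau - d / 2)).
  assert (Hs : t0 <= s < tau) by (split; [apply Rmax_l|apply Rmax_lub_lt; lra]).
  assert (Hws : 0 < - w s).
  { apply Hnear. generalize (Rmax_r t0 (tau - d / 2)); fold s; intro.
    rewrite Rabs_left; lra. }
  specialize (Hleft s Hs). lra.
Qed.

Lemma first_zero (w : R -> R) (t0 t1 : R) : t0 <= t1 ->
  (forall t, t0 <= t <= t1 -> continuous w t) -> 0 < w t0 -> w t1 <= 0 ->
  exists tau, t0 < tau <= t1 /\ w tau = 0 /\ forall s, t0 <= s < tau -> 0 < w s.
Proof.
  intros Ht01 Hc Hw0 Hw1.
  set (S := fun s => t0 <= s <= t1 /\ forall u, t0 <= u <= s -> 0 < w u).
  assert (HS0 : S t0).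
  { split; [lra|]. intros u Hu. replace u with t0 by lra. exact Hw0. }
  destruct (completeness S) as [tau [Hub Hlub]].
  { exists t1. intros s Hs. apply Hs. }
  { now exists t0. }
  assert (Htau0 : t0 <= tau) by (apply Hub, HS0).
  assert (Htau1 : tau <= t1) by (apply Hlub; intros s Hs; apply Hs).
  assert (Hleft : forall s, t0 <= s < tau -> 0 < w s).
  { intros s Hs. destruct (classic (exists s', S s' /\ s <= s')) as [[s' [Hs' Hss']]|Hn].
    - apply Hs'. lra.
    - exfalso. assert (tau <= s); [|lra].
      apply Hlub. intros s' Hs'. apply Rnot_lt_le. intro Hlt.
      apply Hn. exists s'. split; [exact Hs'|lra]. }
  assert (Hnpos : ~ 0 < w tau).
  { intro Hpos.
    destruct (continuous_pos_near w tau (Hc tau ltac:(lra)) Hpos) as [d [Hd Hnear]].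
    assert (Hlt : tau < t1) by (destruct Htau1 as [ | ->]; [assumption|lra]).
    set (s := Rmin t1 (tau + d / 2)).
    assert (Hs : tau < s <= t1) by (split; [apply Rmin_glb_lt; lra|apply Rmin_l]).
    assert (HSs : S s).
    { split; [lra|]. intros u Hu. destruct (Rlt_or_le u tau); [apply Hleft; lra|].
      apply Hnear. generalize (Rmin_r t1 (tau + d / 2)); fold s; intro.
      rewrite Rabs_right; lra. }
    specialize (Hub s HSs). lra. }
  assert (Htau : t0 < tau) by (destruct Htau0 as [ | <-]; [assumption|lra]).
  assert (Hnneg := continuous_nonneg_of_pos_left w t0 tau Htau (Hc tau ltac:(lra)) Hleft).
  exists tau. repeat split; try assumption; lra.
Qed.

Lemma pos_of_no_zero (g : R -> R) (T : R) :
  (forall t, T <= t -> continuous g t) -> (forall t, T <= t -> g t <> 0) -> 0 < g T ->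
  forall t, T <= t -> 0 < g t.
Proof.
  intros Hc Hnz HgT t Ht.
  destruct (Rle_or_lt (g t) 0) as [Hle|Hlt]; [exfalso|exact Hlt].
  assert (Hneg : g t < 0) by (destruct Hle; [assumption|exfalso; exact (Hnz t Ht H)]).
  assert (HTt : T < t) by (destruct Ht as [ | <-]; [assumption|lra]).
  destruct (Ranalysis5.IVT_interv (fun u => - g u) T t) as [z [Hz Hgz]]; try lra.
  - intros u Hu. apply continuity_pt_opp, continuity_pt_filterlim, Hc. lra.
  - apply (Hnz z ltac:(lra)). lra.
Qed.

Lemma increment_lb (f df : R -> R) (d s t : R) :
  (forall u, 0 < u -> is_derive f u (df u)) -> 0 < s -> s <= t ->
  (forall u, s <= u <= t -> d <= df u) -> d * (t - s) <= f t - f s.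
Proof.
  intros Hd Hs Hst Hdf.
  destruct (MVT_gen f s t df) as [u [Hu Heq]].
  - intros u Hu. rewrite Rmin_left in Hu by lra. apply Hd. lra.
  - intros u Hu. rewrite Rmin_left in Hu by lra.
    apply continuity_pt_filterlim, (is_derive_continuous f u (df u)), Hd. lra.
  - rewrite Rmin_left in Hu by lra. rewrite Rmax_right in Hu by lra.
    rewrite Heq. apply Rmult_le_compat_r; [lra|]. apply Hdf. lra.
Qed.

Lemma nondecreasing_of_derive_nonneg (f df : R -> R) (T : R) :
  (forall u, 0 < u -> is_derive f u (df u)) -> 0 < T ->
  (forall u, T <= u -> 0 <= df u) -> forall s t, T <= s -> s <= t -> f s <= f t.
Proof.
  intros Hd HT Hdf s t Hs Hst.
  assert (H := increment_lb f df 0 s t Hd ltac:(lra) Hst (fun u Hu => Hdf u ltac:(lra))).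
  lra.
Qed.

Lemma is_derive_first_zero_nonpos (g : R -> R) (t0 tau l : R) :
  t0 < tau -> is_derive g tau l -> g tau = 0 ->
  (forall s, t0 <= s < tau -> 0 < g s) -> l <= 0.
Proof.
  intros Htau Hd Hz Hpos. apply Rnot_lt_le. intro Hl.
  apply is_derive_Reals in Hd.
  destruct (Hd (l / 2) ltac:(lra)) as [d Hdd].
  set (s := Rmax t0 (tau - d / 2)).
  assert (Hs1 : t0 <= s) by apply Rmax_l.
  assert (Hs2 : tau - d / 2 <= s) by apply Rmax_r.
  assert (Hs3 : s < tau) by (apply Rmax_lub_lt; generalize (cond_pos d); lra).
  specialize (Hdd (s - tau) ltac:(lra)).
  replace (tau + (s - tau)) with s in Hdd by ring.
  assert (Habs : Rabs (s - tau) < d) by (rewrite Rabs_left; lra).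
  specialize (Hdd Habs). apply Rabs_def2 in Hdd.
  specialize (Hpos s ltac:(lra)). rewrite Hz in Hdd.
  assert (Hneg : (g s - 0) / (s - tau) < 0) by (apply Rdiv_pos_neg; lra).
  lra.
Qed.

Lemma ex_primitive (h : R -> R) : (forall t, 0 < t -> continuous h t) ->
  exists H, forall t, 0 < t -> is_derive H t (h t).
Proof.
  intros Hc. exists (fun t => RInt h 1 t). intros t Ht.
  apply (is_derive_RInt h (fun t => RInt h 1 t) 1 t); [|apply Hc; exact Ht].
  exists (mkposreal (t / 2) ltac:(lra)). intros s Hs.
  assert (Hst : Rabs (s - t) < t / 2) by exact Hs. apply Rabs_def2 in Hst.
  apply (RInt_correct (V := R_CompleteNormedModule)).
  apply (ex_RInt_continuous (V := R_CompleteNormedModule)). intros z Hz. apply Hc.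
  assert (0 < Rmin 1 s) by (apply Rmin_pos; lra). lra.
Qed.

Lemma pos_of_per_capita_rate (f h : R -> R) :
  (forall t, 0 < t -> is_derive f t (f t * h t)) ->
  (forall t, 0 < t -> continuous h t) ->
  0 < f 0 -> filterlim f (at_right 0) (locally (f 0)) ->
  forall t, 0 <= t -> 0 < f t.
Proof.
  intros Df Ch Hf0 Hlim t Ht.
  destruct (Req_dec t 0) as [->|Ht0]; [exact Hf0|].
  destruct (ex_primitive h Ch) as [H DH].
  set (z := fun u => f u * exp (- H u)).
  assert (Dz : forall u, 0 < u -> is_derive z u 0).
  { intros u Hu. apply is_derive_Reals.
    replace 0 with (f u * h u * exp (- H u) + f u * (exp (- H u) * - h u)) by ring.
    apply (derivable_pt_lim_mult f (fun v => exp (- H v))); [apply is_derive_Reals, Df, Hu|].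
    apply (derivable_pt_lim_comp (fun v => - H v) exp); [|apply derivable_pt_lim_exp].
    apply derivable_pt_lim_opp, is_derive_Reals, DH, Hu. }
  destruct (proj1 (filterlim_locally f (f 0)) Hlim (mkposreal _ Hf0)) as [d Hd].
  assert (Hd0 : 0 < d) by apply cond_pos.
  set (t1 := Rmin t (d / 2)).
  assert (Ht1 : 0 < t1) by (apply Rmin_pos; lra).
  assert (Hft1 : 0 < f t1).
  { assert (Hball : Rabs (f t1 - f 0) < f 0).
    { apply (Hd t1); [|exact Ht1].
      change (Rabs (t1 - 0) < d). rewrite Rabs_right; [|lra].
      generalize (Rmin_r t (d / 2)); fold t1; lra. }
    apply Rabs_def2 in Hball. lra. }
  assert (Hz : z t1 <= z t).
  { apply (nondecreasing_of_derive_nonneg z (fun _ => 0) t1 Dz Ht1); [intros; lra|lra|].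
    apply Rmin_l. }
  unfold z in Hz.
  assert (0 < f t1 * exp (- H t1)) by (apply Rmult_lt_0_compat; [exact Hft1|apply exp_pos]).
  apply Rnot_le_lt. intro Hn.
  assert (f t * exp (- H t) <= 0) by (apply Rmult_le_0_r; [exact Hn|left; apply exp_pos]).
  lra.
Qed.

(** * Limits at infinity *)

Lemma is_lim_p_infty_ball (f : R -> R) (L eps : R) : is_lim f p_infty L -> 0 < eps ->
  exists M, forall t, M < t -> Rabs (f t - L) < eps.
Proof. intros Hl He. apply is_lim_spec in Hl. exact (Hl (mkposreal eps He)). Qed.

Lemma is_lim_p_infty_nonneg (f : R -> R) (L : R) :
  (forall t, 0 < t -> 0 < f t) -> is_lim f p_infty L -> 0 <= L.
Proof.
  intros Hpos Hf.
  apply (is_lim_le_loc (fun _ => 0) f p_infty 0 L); [|apply is_lim_const|exact Hf].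
  exists 0. intros t Ht. left. apply Hpos, Ht.
Qed.

Lemma is_lim_of_nondecreasing_bounded (f : R -> R) (T B : R) :
  (forall s t, T <= s -> s <= t -> f s <= f t) -> (forall t, T <= t -> f t <= B) ->
  exists L : R, is_lim f p_infty L.
Proof.
  intros Hmon Hb.
  set (E := fun v => exists t, T <= t /\ v = f t).
  destruct (completeness E) as [L [Hub Hlub]].
  - exists B. intros v [t [Ht ->]]. apply Hb, Ht.
  - exists (f T), T. split; [lra|reflexivity].
  - exists L. apply is_lim_spec. intros eps. simpl.
    assert (He : 0 < eps) by apply cond_pos.
    destruct (classic (exists t, T <= t /\ L - eps < f t)) as [[t0 [Ht0 Hf0]]|Hn].
    + exists t0. intros t Ht.
      assert (f t0 <= f t) by (apply Hmon; lra).
      assert (f t <= L) by (apply Hub; exists t; split; [lra|reflexivity]).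
      apply Rabs_def1; lra.
    + exfalso. assert (L <= L - eps); [|lra].
      apply Hlub. intros v [t [Ht ->]].
      apply Rnot_lt_le. intro Hlt. apply Hn. now exists t.
Qed.

Lemma ex_lim_of_derive_nonneg (f df : R -> R) (T B : R) :
  (forall t, 0 < t -> is_derive f t (df t)) -> 0 < T ->
  (forall t, T <= t -> 0 <= df t) -> (forall t, T <= t -> f t <= B) ->
  exists L : R, is_lim f p_infty L.
Proof.
  intros Hd HT Hdf.
  exact (is_lim_of_nondecreasing_bounded f T B (nondecreasing_of_derive_nonneg f df T Hd HT Hdf)).
Qed.

Lemma ex_lim_of_derive_nonpos (f df : R -> R) (T B : R) :
  (forall t, 0 < t -> is_derive f t (df t)) -> 0 < T ->
  (forall t, T <= t -> df t <= 0) -> (forall t, T <= t -> B <= f t) ->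
  exists L : R, is_lim f p_infty L.
Proof.
  intros Hd HT Hdf Hb.
  destruct (ex_lim_of_derive_nonneg (fun t => - f t) (fun t => - df t) T (- B)) as [L HL].
  - intros t Ht. apply (is_derive_opp f t (df t)), Hd, Ht.
  - exact HT.
  - intros t Ht. specialize (Hdf t Ht). lra.
  - intros t Ht. specialize (Hb t Ht). lra.
  - exists (- L). apply (is_lim_ext (fun t => - - f t)); [intro; ring|].
    exact (is_lim_opp (fun t => - f t) p_infty L HL).
Qed.

Lemma is_lim_derive_not_pos (f df : R -> R) (L l : R) :
  (forall t, 0 < t -> is_derive f t (df t)) ->
  is_lim f p_infty L -> is_lim df p_infty l -> ~ 0 < l.
Proof.
  intros Hd Hf Hdf Hl.
  destruct (is_lim_p_infty_ball f L 1 Hf ltac:(lra)) as [M1 HM1].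
  destruct (is_lim_p_infty_ball df l (l / 2) Hdf ltac:(lra)) as [M2 HM2].
  set (T := Rmax 1 (Rmax M1 M2) + 1).
  assert (HT : 1 <= Rmax 1 (Rmax M1 M2) /\ M1 <= Rmax 1 (Rmax M1 M2) /\
               M2 <= Rmax 1 (Rmax M1 M2)).
  { generalize (Rmax_l 1 (Rmax M1 M2)) (Rmax_r 1 (Rmax M1 M2)) (Rmax_l M1 M2) (Rmax_r M1 M2).
    lra. }
  assert (Hl4 : 0 < 4 / l) by (apply Rdiv_lt_0_compat; lra).
  (* over a time 4 / l the slope l / 2 moves f by 2, more than its oscillation *)
  assert (Hgrow : l / 2 * (T + 4 / l - T) <= f (T + 4 / l) - f T).
  { apply (increment_lb f df); [exact Hd|unfold T; lra|lra|].
    intros u Hu. specialize (HM2 u ltac:(unfold T in *; lra)).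
    apply Rabs_def2 in HM2. lra. }
  replace (l / 2 * (T + 4 / l - T)) with 2 in Hgrow by (field; lra).
  assert (H1 := HM1 T ltac:(unfold T; lra)).
  assert (H2 := HM1 (T + 4 / l) ltac:(unfold T; lra)).
  apply Rabs_def2 in H1. apply Rabs_def2 in H2. lra.
Qed.

Lemma is_lim_derive_eq0 (f df : R -> R) (L l : R) :
  (forall t, 0 < t -> is_derive f t (df t)) ->
  is_lim f p_infty L -> is_lim df p_infty l -> l = 0.
Proof.
  intros Hd Hf Hdf.
  assert (Hneg : ~ 0 < - l).
  { apply (is_lim_derive_not_pos (fun t => - f t) (fun t => - df t) (- L)).
    - intros t Ht. apply (is_derive_opp f t (df t)), Hd, Ht.
    - exact (is_lim_opp f p_infty L Hf).
    - exact (is_lim_opp df p_infty l Hdf). }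
  assert (Hpos := is_lim_derive_not_pos f df L l Hd Hf Hdf). lra.
Qed.

Lemma per_capita_rate_limit (f h : R -> R) (L H : R) :
  (forall t, 0 < t -> 0 < f t) ->
  (forall t, 0 < t -> is_derive f t (f t * h t)) ->
  is_lim f p_infty L -> is_lim h p_infty H -> H <= 0 /\ (0 < L -> H = 0).
Proof.
  intros Hpos Hd Hf Hh.
  assert (HLH : L * H = 0).
  { apply (is_lim_derive_eq0 f (fun t => f t * h t) L (L * H) Hd Hf).
    exact (is_lim_mult f h p_infty L H Hf Hh I). }
  assert (HH : H <= 0).
  { apply Rnot_lt_le. intro HH.
    destruct (is_lim_p_infty_ball h H (H / 2) Hh ltac:(lra)) as [M HM].
    set (T := Rmax M 0 + 1).
    assert (HT : M < T /\ 0 < T) by (generalize (Rmax_l M 0) (Rmax_r M 0); unfold T; lra).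
    assert (Hmon : forall t, T <= t -> f T <= f t).
    { intros t Ht. apply (nondecreasing_of_derive_nonneg f (fun t => f t * h t) T Hd);
        [lra| |lra|exact Ht].
      intros u Hu. specialize (HM u ltac:(lra)). apply Rabs_def2 in HM.
      specialize (Hpos u ltac:(lra)). nra. }
    assert (HfL : Rbar_le (f T) L).
    { apply (is_lim_le_loc (fun _ => f T) f p_infty); [|apply is_lim_const|exact Hf].
      exists T. intros t Ht. apply Hmon. lra. }
    simpl in HfL. specialize (Hpos T ltac:(lra)). nra. }
  split; [exact HH|]. intro HL. nra.
Qed.

(** * Cooperative linear systems *)

Lemma cross_rate_pos (al be lam p r e : R) :
  0 < e -> 0 <= be -> al + be < lam -> p + e = 0 -> 0 <= r + e ->
  0 < al * p + be * r + e * lam.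
Proof.
  intros He Hbe Hlam Hp Hr.
  replace (al * p + be * r + e * lam) with (e * (lam - al - be) + be * (r + e))
    by (replace p with (- e) by lra; ring).
  assert (0 < e * (lam - al - be)) by (apply Rmult_lt_0_compat; lra).
  assert (0 <= be * (r + e)) by (apply Rmult_le_pos; lra).
  lra.
Qed.

Section Cooperative.

Variables p r al be ga de : R -> R.
Hypothesis Dp : forall t, 0 < t -> is_derive p t (al t * p t + be t * r t).
Hypothesis Dr : forall t, 0 < t -> is_derive r t (ga t * p t + de t * r t).
Hypothesis be_ge0 : forall t, 0 < t -> 0 <= be t.
Hypothesis ga_ge0 : forall t, 0 < t -> 0 <= ga t.

(* At the first time p + eps E or r + eps E vanishes, the vanishing one would
   have a positive derivative by cross_rate_pos. *)
Lemma coop_perturbed_pos (E lam : R -> R) (eps t0 : R) :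
  (forall t, 0 < t -> 0 < E t) ->
  (forall t, 0 < t -> is_derive E t (lam t * E t)) ->
  (forall t, 0 < t -> al t + be t < lam t /\ ga t + de t < lam t) ->
  0 < eps -> 0 < t0 -> 0 <= p t0 -> 0 <= r t0 ->
  forall t, t0 <= t -> 0 < p t + eps * E t /\ 0 < r t + eps * E t.
Proof.
  intros HE DE Hlam Heps Ht0 Hp0 Hr0 t Ht.
  set (pe := fun u => p u + eps * E u).
  set (re := fun u => r u + eps * E u).
  assert (Dpe : forall u, 0 < u ->
    is_derive pe u (al u * p u + be u * r u + eps * (lam u * E u))).
  { intros u Hu. apply (is_derive_plus p (fun v => eps * E v)); [apply Dp, Hu|].
    apply is_derive_scal, DE, Hu. }
  assert (Dre : forall u, 0 < u ->
    is_derive re u (ga u * p u + de u * r u + eps * (lam u * E u))).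
  { intros u Hu. apply (is_derive_plus r (fun v => eps * E v)); [apply Dr, Hu|].
    apply is_derive_scal, DE, Hu. }
  set (w := fun u => Rmin (pe u) (re u)).
  assert (Hw : forall u, 0 < w u -> 0 < pe u /\ 0 < re u).
  { intros u Hu. split; eapply Rlt_le_trans; [exact Hu|apply Rmin_l|exact Hu|apply Rmin_r]. }
  apply Hw, Rnot_le_lt. intro Hwt.
  assert (HE0 := HE t0 Ht0).
  destruct (first_zero w t0 t Ht) as [tau [Htau [Hwtau Hleft]]].
  { intros u Hu. apply continuous_Rmin; eapply is_derive_continuous;
      [apply Dpe|apply Dre]; lra. }
  { apply Rmin_glb_lt; unfold pe, re; nra. }
  { exact Hwt. }
  assert (Htau0 : 0 < tau) by lra.
  assert (HEtau : 0 < eps * E tau) by (apply Rmult_lt_0_compat; [lra|apply HE, Htau0]).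
  destruct (Hlam tau Htau0) as [Hl1 Hl2].
  unfold w, Rmin in Hwtau. destruct (Rle_dec (pe tau) (re tau)) as [Hle|Hgt].
  - assert (Hd := is_derive_first_zero_nonpos pe t0 tau _ (proj1 Htau) (Dpe tau Htau0) Hwtau
      (fun s Hs => proj1 (Hw s (Hleft s Hs)))).
    unfold pe, re in Hwtau, Hle.
    assert (Hcross := cross_rate_pos (al tau) (be tau) (lam tau) (p tau) (r tau)
      (eps * E tau) HEtau (be_ge0 tau Htau0) Hl1 Hwtau ltac:(lra)).
    lra.
  - assert (Hd := is_derive_first_zero_nonpos re t0 tau _ (proj1 Htau) (Dre tau Htau0) Hwtau
      (fun s Hs => proj2 (Hw s (Hleft s Hs)))).
    unfold pe, re in Hwtau, Hgt.
    assert (Hcross := cross_rate_pos (de tau) (ga tau) (lam tau) (r tau) (p tau)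
      (eps * E tau) HEtau (ga_ge0 tau Htau0) ltac:(lra) Hwtau ltac:(lra)).
    lra.
Qed.

Hypothesis al_cont : forall t, 0 < t -> continuous al t.
Hypothesis be_cont : forall t, 0 < t -> continuous be t.
Hypothesis ga_cont : forall t, 0 < t -> continuous ga t.
Hypothesis de_cont : forall t, 0 < t -> continuous de t.

Lemma coop_nonneg_invariant (t0 : R) : 0 < t0 -> 0 <= p t0 -> 0 <= r t0 ->
  forall t, t0 <= t -> 0 <= p t /\ 0 <= r t.
Proof.
  intros Ht0 Hp0 Hr0 t Ht.
  set (lam := fun u => 1 + (al u * al u + be u * be u) + (ga u * ga u + de u * de u)).
  assert (Clam : forall u, 0 < u -> continuous lam u).
  { intros u Hu. unfold lam.
    repeat first [apply continuous_Rplus | apply continuous_Rmult | apply continuous_const];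
      auto. }
  destruct (ex_primitive lam Clam) as [G DG].
  set (E := fun u => exp (G u)).
  assert (HE : forall u, 0 < u -> 0 < E u) by (intros; apply exp_pos).
  assert (DE : forall u, 0 < u -> is_derive E u (lam u * E u)).
  { intros u Hu. apply (is_derive_comp exp G u (exp (G u)) (lam u)); [apply is_derive_exp|].
    apply DG, Hu. }
  assert (Hlam : forall u, 0 < u -> al u + be u < lam u /\ ga u + de u < lam u).
  { intros u Hu. unfold lam.
    generalize (Rle_0_sqr (al u - / 2)) (Rle_0_sqr (be u - / 2)) (Rle_0_sqr (ga u - / 2))
      (Rle_0_sqr (de u - / 2)) (Rle_0_sqr (al u)) (Rle_0_sqr (be u)) (Rle_0_sqr (ga u))
      (Rle_0_sqr (de u)).
    unfold Rsqr. intros. split; nra. }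
  assert (HEt := HE t ltac:(lra)).
  split; apply Rle_plus_epsilon; intros eps Heps;
    destruct (coop_perturbed_pos E lam (eps / E t) t0 HE DE Hlam
      ltac:(apply Rdiv_lt_0_compat; lra) Ht0 Hp0 Hr0 t Ht) as [Hp Hr];
    replace (eps / E t * E t) with eps in * by (field; lra); lra.
Qed.

End Cooperative.

Lemma coop_nonpos_invariant (p r al be ga de : R -> R) :
  (forall t, 0 < t -> is_derive p t (al t * p t + be t * r t)) ->
  (forall t, 0 < t -> is_derive r t (ga t * p t + de t * r t)) ->
  (forall t, 0 < t -> 0 <= be t) -> (forall t, 0 < t -> 0 <= ga t) ->
  (forall t, 0 < t -> continuous al t) -> (forall t, 0 < t -> continuous be t) ->
  (forall t, 0 < t -> continuous ga t) -> (forall t, 0 < t -> continuous de t) ->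
  forall t0, 0 < t0 -> p t0 <= 0 -> r t0 <= 0 ->
  forall t, t0 <= t -> p t <= 0 /\ r t <= 0.
Proof.
  intros Dp Dr Hbe Hga Cal Cbe Cga Cde t0 Ht0 Hp0 Hr0 t Ht.
  assert (Dnp : forall t, 0 < t ->
    is_derive (fun u => - p u) t (al t * - p t + be t * - r t)).
  { intros u Hu. replace (al u * - p u + be u * - r u) with (- (al u * p u + be u * r u))
      by ring.
    apply (is_derive_opp p), Dp, Hu. }
  assert (Dnr : forall t, 0 < t ->
    is_derive (fun u => - r u) t (ga t * - p t + de t * - r t)).
  { intros u Hu. replace (ga u * - p u + de u * - r u) with (- (ga u * p u + de u * r u))
      by ring.
    apply (is_derive_opp r), Dr, Hu. }
  destruct (coop_nonneg_invariant _ _ al be ga de Dnp Dnr Hbe Hga Cal Cbe Cga Cde t0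
    Ht0 ltac:(lra) ltac:(lra) t Ht).
  lra.
Qed.

Lemma coop_eventually_signed (p r al be ga de : R -> R) :
  (forall t, 0 < t -> is_derive p t (al t * p t + be t * r t)) ->
  (forall t, 0 < t -> is_derive r t (ga t * p t + de t * r t)) ->
  (forall t, 0 < t -> 0 <= be t) -> (forall t, 0 < t -> 0 <= ga t) ->
  (forall t, 0 < t -> continuous al t) -> (forall t, 0 < t -> continuous be t) ->
  (forall t, 0 < t -> continuous ga t) -> (forall t, 0 < t -> continuous de t) ->
  exists T, 0 < T /\
    ((forall t, T <= t -> 0 <= p t) \/ (forall t, T <= t -> p t <= 0)) /\
    ((forall t, T <= t -> 0 <= r t) \/ (forall t, T <= t -> r t <= 0)).
Proof.
  intros Dp Dr Hbe Hga Cal Cbe Cga Cde.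
  destruct (classic (exists t0, 1 <= t0 /\ 0 <= p t0 /\ 0 <= r t0))
    as [[t0 [Ht0 [Hp0 Hr0]]]|Hnn].
  { assert (Hinv := coop_nonneg_invariant p r al be ga de Dp Dr Hbe Hga Cal Cbe Cga Cde t0
      ltac:(lra) Hp0 Hr0).
    exists t0. split; [lra|]. split; left; intros t Ht; apply (Hinv t Ht). }
  destruct (classic (exists t0, 1 <= t0 /\ p t0 <= 0 /\ r t0 <= 0))
    as [[t0 [Ht0 [Hp0 Hr0]]]|Hnp].
  { assert (Hinv := coop_nonpos_invariant p r al be ga de Dp Dr Hbe Hga Cal Cbe Cga Cde t0
      ltac:(lra) Hp0 Hr0).
    exists t0. split; [lra|]. split; right; intros t Ht; apply (Hinv t Ht). }
  assert (Hmixed : forall t, 1 <= t -> (0 < p t /\ r t < 0) \/ (p t < 0 /\ 0 < r t)).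
  { intros t Ht.
    destruct (Rtotal_order (p t) 0) as [Hp|[Hp|Hp]];
      destruct (Rtotal_order (r t) 0) as [Hr|[Hr|Hr]];
      first [ left; lra | right; lra
            | exfalso; apply Hnn; exists t; lra
            | exfalso; apply Hnp; exists t; lra ]. }
  assert (Hnz : forall t, 1 <= t -> p t <> 0) by (intros t Ht; destruct (Hmixed t Ht); lra).
  assert (Cp : forall t, 1 <= t -> continuous p t).
  { intros t Ht. eapply is_derive_continuous. apply Dp. lra. }
  exists 1. split; [lra|].
  destruct (Hmixed 1 ltac:(lra)) as [[Hp1 _]|[Hp1 _]].
  - assert (Hpos := pos_of_no_zero p 1 Cp Hnz Hp1).
    split; [left|right]; intros t Ht; specialize (Hpos t Ht); [lra|].
    destruct (Hmixed t Ht); lra.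
  - assert (Hneg := pos_of_no_zero (fun u => - p u) 1
      (fun t Ht => continuous_opp p t (Cp t Ht)) (fun t Ht => ltac:(specialize (Hnz t Ht); lra))
      ltac:(lra)).
    split; [right|left]; intros t Ht; specialize (Hneg t Ht); simpl in Hneg; [lra|].
    destruct (Hmixed t Ht); lra.
Qed.

(** * The competition model *)

Definition gx (c x y : R) : R := 1 - x - c * y.
Definition gy (a k m x y : R) : R := / (1 + k * x) - y - a * x - m * x * y.

Section Model.

Variables a b c k m : R.
Hypotheses (ha : 0 < a) (hb : 0 < b) (hc : 0 < c) (hk : 0 < k) (hm : 0 < m).
Variables x y : R -> R.
Hypothesis sol : is_solution a b c k m x y.
Hypotheses (hx0 : 0 < x 0) (hy0 : 0 < y 0).

Lemma x_deriv (t : R) : 0 < t -> is_derive x t (x t * (b * gx c (x t) (y t))).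
Proof.
  intro Ht. replace (x t * (b * gx c (x t) (y t))) with (fx a b c k m (x t) (y t))
    by (unfold fx, gx; ring).
  apply sol, Ht.
Qed.

Lemma y_deriv (t : R) : 0 < t -> is_derive y t (y t * gy a k m (x t) (y t)).
Proof.
  intro Ht. replace (y t * gy a k m (x t) (y t)) with (fy a b c k m (x t) (y t))
    by (unfold fy, gy; ring).
  apply sol, Ht.
Qed.

Lemma x_ex_derive (t : R) : 0 < t -> ex_derive x t.
Proof. intro Ht. eexists. apply x_deriv, Ht. Qed.

Lemma y_ex_derive (t : R) : 0 < t -> ex_derive y t.
Proof. intro Ht. eexists. apply y_deriv, Ht. Qed.

Lemma x_pos (t : R) : 0 <= t -> 0 < x t.
Proof.
  apply (pos_of_per_capita_rate x (fun t => b * gx c (x t) (y t)) x_deriv); [|exact hx0|apply sol].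
  intros u Hu. apply (ex_derive_continuous (K := R_AbsRing) (V := R_NormedModule)).
  unfold gx. auto_derive. auto using x_ex_derive, y_ex_derive.
Qed.

Lemma one_plus_kx_pos (t : R) : 0 < t -> 0 < 1 + k * x t.
Proof. intro Ht. generalize (x_pos t ltac:(lra)). nra. Qed.

Lemma y_pos (t : R) : 0 <= t -> 0 < y t.
Proof.
  apply (pos_of_per_capita_rate y (fun t => gy a k m (x t) (y t)) y_deriv); [|exact hy0|apply sol].
  intros u Hu. apply (ex_derive_continuous (K := R_AbsRing) (V := R_NormedModule)).
  assert (Hpos := one_plus_kx_pos u Hu).
  unfold gy. auto_derive. repeat split; auto using x_ex_derive, y_ex_derive. lra.
Qed.

Lemma gx_deriv (t : R) : 0 < t ->
  is_derive (fun u => gx c (x u) (y u)) t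
    ((- b * x t) * gx c (x t) (y t) + (c * y t) * - gy a k m (x t) (y t)).
Proof.
  intro Ht. assert (Dx := x_deriv t Ht). assert (Dy := y_deriv t Ht).
  unfold gx. auto_derive; [auto using x_ex_derive, y_ex_derive|].
  replace (Derive (fun u => x u) t) with (x t * (b * gx c (x t) (y t)))
    by (symmetry; apply is_derive_unique, Dx).
  replace (Derive (fun u => y u) t) with (y t * gy a k m (x t) (y t))
    by (symmetry; apply is_derive_unique, Dy).
  unfold gx. ring.
Qed.

Lemma neg_gy_deriv (t : R) : 0 < t ->
  is_derive (fun u => - gy a k m (x u) (y u)) t
    ((b * x t * (k / (1 + k * x t) ^ 2 + a + m * y t)) * gx c (x t) (y t)
     + (- (y t * (1 + m * x t))) * - gy a k m (x t) (y t)).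
Proof.
  intro Ht. assert (Dx := x_deriv t Ht). assert (Dy := y_deriv t Ht).
  assert (Hpos := one_plus_kx_pos t Ht).
  unfold gy. auto_derive; [repeat split; auto using x_ex_derive, y_ex_derive; lra|].
  replace (Derive (fun u => x u) t) with (x t * (b * gx c (x t) (y t)))
    by (symmetry; apply is_derive_unique, Dx).
  replace (Derive (fun u => y u) t) with (y t * gy a k m (x t) (y t))
    by (symmetry; apply is_derive_unique, Dy).
  unfold gx, gy. field. lra.
Qed.

Lemma rates_eventually_signed : exists T, 0 < T /\
  ((forall t, T <= t -> 0 <= gx c (x t) (y t)) \/ (forall t, T <= t -> gx c (x t) (y t) <= 0)) /\
  ((forall t, T <= t -> 0 <= gy a k m (x t) (y t)) \/
   (forall t, T <= t -> gy a k m (x t) (y t) <= 0)).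
Proof.
  destruct (coop_eventually_signed (fun u => gx c (x u) (y u)) (fun u => - gy a k m (x u) (y u))
    (fun u => - b * x u) (fun u => c * y u)
    (fun u => b * x u * (k / (1 + k * x u) ^ 2 + a + m * y u))
    (fun u => - (y u * (1 + m * x u))) gx_deriv neg_gy_deriv) as [T [HT [Sx Sy]]].
  3-6: intros t Ht; assert (Hpos := one_plus_kx_pos t Ht);
    apply (ex_derive_continuous (K := R_AbsRing) (V := R_NormedModule));
    auto_derive; repeat split; auto using x_ex_derive, y_ex_derive; nra.
  - intros t Ht. generalize (y_pos t ltac:(lra)). nra.
  - intros t Ht. generalize (x_pos t ltac:(lra)) (y_pos t ltac:(lra)). intros.
    assert (0 < k / (1 + k * x t) ^ 2).
    { apply Rdiv_lt_0_compat; [lra|]. apply pow_lt. apply one_plus_kx_pos, Ht. }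
    apply Rmult_le_pos; nra.
  - exists T. split; [exact HT|]. split; [exact Sx|].
    destruct Sy as [Sy|Sy]; [right|left]; intros t Ht; specialize (Sy t Ht); simpl in Sy; lra.
Qed.

Lemma x_converges : exists L1 : R, is_lim x p_infty L1.
Proof.
  destruct rates_eventually_signed as [T [HT [[Sx|Sx] _]]].
  - apply (ex_lim_of_derive_nonneg x _ T 1 x_deriv HT).
    + intros t Ht. generalize (x_pos t ltac:(lra)) (Sx t Ht). intros.
      apply Rmult_le_pos; [lra|]. apply Rmult_le_pos; lra.
    + intros t Ht. generalize (y_pos t ltac:(lra)) (Sx t Ht). unfold gx. nra.
  - apply (ex_lim_of_derive_nonpos x _ T 0 x_deriv HT).
    + intros t Ht. generalize (x_pos t ltac:(lra)) (Sx t Ht). intros.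
      assert (b * gx c (x t) (y t) <= 0) by nra. nra.
    + intros t Ht. generalize (x_pos t ltac:(lra)). lra.
Qed.

Lemma y_converges : exists L2 : R, is_lim y p_infty L2.
Proof.
  destruct rates_eventually_signed as [T [HT [_ [Sy|Sy]]]].
  - apply (ex_lim_of_derive_nonneg y _ T 1 y_deriv HT).
    + intros t Ht. generalize (y_pos t ltac:(lra)) (Sy t Ht). intros.
      apply Rmult_le_pos; lra.
    + intros t Ht. generalize (x_pos t ltac:(lra)) (y_pos t ltac:(lra)) (Sy t Ht).
      intros Hx Hy Hg. unfold gy in Hg.
      assert (/ (1 + k * x t) <= 1).
      { rewrite <- Rinv_1. apply Rinv_le_contravar; nra. }
      assert (0 <= m * x t * y t) by (apply Rmult_le_pos; nra).
      nra.
  - apply (ex_lim_of_derive_nonpos y _ T 0 y_deriv HT).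
    + intros t Ht. generalize (y_pos t ltac:(lra)) (Sy t Ht). intros. nra.
    + intros t Ht. generalize (y_pos t ltac:(lra)). lra.
Qed.

Section Limits.

Variables L1 L2 : R.
Hypotheses (HL1 : is_lim x p_infty L1) (HL2 : is_lim y p_infty L2).

Lemma x_limit_nonneg : 0 <= L1.
Proof. apply (is_lim_p_infty_nonneg x); [intros; apply x_pos; lra|exact HL1]. Qed.

Lemma y_limit_nonneg : 0 <= L2.
Proof. apply (is_lim_p_infty_nonneg y); [intros; apply y_pos; lra|exact HL2]. Qed.

Lemma gx_limit : gx c L1 L2 <= 0 /\ (0 < L1 -> gx c L1 L2 = 0).
Proof.
  assert (Hg : is_lim (fun t => b * gx c (x t) (y t)) p_infty (b * gx c L1 L2)).
  { apply (is_lim_scal_l (fun t => gx c (x t) (y t)) b p_infty (gx c L1 L2)).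
    unfold gx. apply is_lim_minus'; [apply is_lim_minus'; [apply is_lim_const|exact HL1]|].
    exact (is_lim_scal_l y c p_infty L2 HL2). }
  destruct (per_capita_rate_limit x _ L1 _ (fun t Ht => x_pos t ltac:(lra)) x_deriv HL1 Hg)
    as [Hle Heq].
  split; [nra|]. intro HL. specialize (Heq HL). nra.
Qed.

Lemma gy_limit : gy a k m L1 L2 <= 0 /\ (0 < L2 -> gy a k m L1 L2 = 0).
Proof.
  assert (H1 := x_limit_nonneg).
  assert (Hg : is_lim (fun t => gy a k m (x t) (y t)) p_infty (gy a k m L1 L2)).
  { unfold gy. apply is_lim_minus'; [apply is_lim_minus'; [apply is_lim_minus'|]|].
    - apply (is_lim_inv (fun t => 1 + k * x t) p_infty (1 + k * L1)).
      + apply is_lim_plus'; [apply is_lim_const|exact (is_lim_scal_l x k p_infty L1 HL1)].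
      + intro E. injection E. nra.
    - exact HL2.
    - exact (is_lim_scal_l x a p_infty L1 HL1).
    - exact (is_lim_mult (fun t => m * x t) y p_infty (m * L1) L2
        (is_lim_scal_l x m p_infty L1 HL1) HL2 I). }
  exact (per_capita_rate_limit y _ L2 _ (fun t Ht => y_pos t ltac:(lra)) y_deriv HL2 Hg).
Qed.

End Limits.

End Model.

(** * Equilibria *)

(* With u_i = 1/(1 + k x_i), subtracting the two y-nullcline equations gives
   k c u1 u2 = 1 - a c + m x1 - m c y2; together with u1 < 1 and
   k x2 u2 = 1 - u2 this forces c > 1. *)
Lemma pos_equilibria_not_lt (a c k m x1 y1 x2 y2 : R) :
  0 < c -> c < 1 -> 0 < k -> 0 < m ->
  0 < x1 -> 0 < y1 -> gx c x1 y1 = 0 -> gy a k m x1 y1 = 0 ->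
  0 < x2 -> gx c x2 y2 = 0 -> gy a k m x2 y2 = 0 -> ~ y1 < y2.
Proof.
  intros hc hc1 hk hm hx1 hy1 gx1 gy1 hx2 gx2 gy2 Hy.
  unfold gx, gy in *.
  set (u1 := / (1 + k * x1)) in *. set (u2 := / (1 + k * x2)) in *.
  assert (U1 : u1 * (1 + k * x1) = 1) by (unfold u1; field; nra).
  assert (U2 : u2 * (1 + k * x2) = 1) by (unfold u2; field; nra).
  assert (Hu1 : 0 < u1) by (unfold u1; apply Rinv_0_lt_compat; nra).
  assert (Hu2 : 0 < u2) by (unfold u2; apply Rinv_0_lt_compat; nra).
  assert (Hu1' : u1 < 1).
  { assert (0 < u1 * (k * x1)) by (apply Rmult_lt_0_compat; nra). nra. }
  assert (Hdiff : u2 - u1 = k * c * u1 * u2 * (y2 - y1)).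
  { transitivity (u2 * (u1 * (1 + k * x1)) - u1 * (u2 * (1 + k * x2))).
    - rewrite U1, U2. ring.
    - replace x1 with (1 - c * y1) by lra. replace x2 with (1 - c * y2) by lra. ring. }
  assert (Hslope : k * c * u1 * u2 = 1 - a * c + m * x1 - m * c * y2).
  { apply Rmult_eq_reg_r with (y2 - y1); [|lra].
    rewrite <- Hdiff.
    replace u1 with (y1 + a * x1 + m * x1 * y1) by lra.
    replace u2 with (y2 + a * x2 + m * x2 * y2) by lra.
    replace x2 with (x1 - c * (y2 - y1)) by lra. ring. }
  assert (Hgt : k * c * u2 * x2 > (1 - a * c - m * c * y2) * x2).
  { apply Rmult_gt_compat_r; [exact hx2|].
    assert (Hkcu2 : 0 < k * c * u2) by (apply Rmult_lt_0_compat; [nra|lra]).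
    assert (k * c * u2 * u1 < k * c * u2 * 1) by (apply Rmult_lt_compat_l; lra).
    assert (0 < m * x1) by nra.
    nra. }
  assert (Hkx2 : k * u2 * x2 = 1 - y2 - a * x2 - m * x2 * y2) by nra.
  nra.
Qed.

Lemma pos_equilibrium_unique (a c k m x1 y1 x2 y2 : R) :
  0 < c -> c < 1 -> 0 < k -> 0 < m ->
  0 < x1 -> 0 < y1 -> gx c x1 y1 = 0 -> gy a k m x1 y1 = 0 ->
  0 < x2 -> 0 < y2 -> gx c x2 y2 = 0 -> gy a k m x2 y2 = 0 ->
  x1 = x2 /\ y1 = y2.
Proof.
  intros hc hc1 hk hm hx1 hy1 gx1 gy1 hx2 hy2 gx2 gy2.
  assert (Hy : y1 = y2).
  { destruct (Rtotal_order y1 y2) as [Hlt|[Heq|Hgt]]; [exfalso| exact Heq |exfalso].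
    - exact (pos_equilibria_not_lt a c k m x1 y1 x2 y2 hc hc1 hk hm
        hx1 hy1 gx1 gy1 hx2 gx2 gy2 Hlt).
    - exact (pos_equilibria_not_lt a c k m x2 y2 x1 y1 hc hc1 hk hm
        hx2 hy2 gx2 gy2 hx1 gx1 gy1 Hgt). }
  unfold gx in gx1, gx2. split; [nra|exact Hy].
Qed.

Lemma limit_is_pos_equilibrium (a c k m L1 L2 xs ys : R) :
  0 < a -> 0 < c -> c < 1 -> 0 < k -> 0 < m -> a * (1 + k) < 1 ->
  0 <= L1 -> 0 <= L2 ->
  gx c L1 L2 <= 0 -> (0 < L1 -> gx c L1 L2 = 0) ->
  gy a k m L1 L2 <= 0 -> (0 < L2 -> gy a k m L1 L2 = 0) ->
  0 < xs -> 0 < ys -> gx c xs ys = 0 -> gy a k m xs ys = 0 ->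
  L1 = xs /\ L2 = ys.
Proof.
  intros ha hc hc1 hk hm hak HL1 HL2 Hgx Hgx0 Hgy Hgy0 hxs hys Exs Eys.
  unfold gx, gy in Hgx, Hgx0, Hgy, Hgy0.
  destruct HL1 as [HL1|HL1]; [|exfalso; subst L1].
  - destruct HL2 as [HL2|HL2]; [|exfalso; subst L2].
    + exact (pos_equilibrium_unique a c k m L1 L2 xs ys hc hc1 hk hm HL1 HL2
        (Hgx0 HL1) (Hgy0 HL2) hxs hys Exs Eys).
    + assert (L1 = 1) by (specialize (Hgx0 HL1); lra). subst L1.
      rewrite Rmult_1_r, Rmult_0_r in Hgy.
      assert (Hinv : / (1 + k) <= a) by lra.
      apply (Rmult_le_compat_r (1 + k)) in Hinv; [|lra].
      rewrite Rinv_l in Hinv by lra. lra.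
  - assert (HL2' : 0 < L2) by nra.
    specialize (Hgy0 HL2'). rewrite Rmult_0_r, Rplus_0_r, Rinv_1 in Hgy0. nra.
Qed.

Theorem theorem7 (a b c k m : R)
  (ha : 0 < a) (hb : 0 < b) (hc : 0 < c) (hk : 0 < k) (hm : 0 < m)
  (hc1 : c < 1) (hk1 : k < / a - 1)
  (xs ys : R) (heq : pos_equilibrium a b c k m xs ys)
  (hnode : stable_node a b c k m xs ys) :
  forall x y : R -> R, is_solution a b c k m x y ->
    0 < x 0 -> 0 < y 0 ->
    is_lim x p_infty xs /\ is_lim y p_infty ys.
Proof.
  intros x y sol hx0 hy0.
  destruct heq as [hxs [hys [Efx Efy]]].
  assert (Exs : gx c xs ys = 0).
  { unfold fx in Efx. unfold gx. apply (Rmult_eq_reg_l (b * xs)); [lra|nra]. }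
  assert (Eys : gy a k m xs ys = 0).
  { unfold fy in Efy. unfold gy. apply (Rmult_eq_reg_l ys); lra. }
  assert (hak : a * (1 + k) < 1).
  { assert (Ha1 : a * (1 + k) < a * / a) by (apply Rmult_lt_compat_l; lra).
    rewrite Rinv_r in Ha1 by lra. exact Ha1. }
  assert (HL1 : exists L1 : R, is_lim x p_infty L1)
    by (eapply (x_converges a b c k m); eassumption).
  assert (HL2 : exists L2 : R, is_lim y p_infty L2)
    by (eapply (y_converges a b c k m); eassumption).
  destruct HL1 as [L1 HL1], HL2 as [L2 HL2].
  assert (Hgx : gx c L1 L2 <= 0 /\ (0 < L1 -> gx c L1 L2 = 0))
    by (eapply (gx_limit a b c k m); eassumption).
  assert (Hgy : gy a k m L1 L2 <= 0 /\ (0 < L2 -> gy a k m L1 L2 = 0))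
    by (eapply (gy_limit a b c k m); eassumption).
  assert (HL1pos : 0 <= L1) by (eapply (x_limit_nonneg a b c k m); eassumption).
  assert (HL2pos : 0 <= L2) by (eapply (y_limit_nonneg a b c k m); eassumption).
  destruct Hgx, Hgy.
  destruct (limit_is_pos_equilibrium a c k m L1 L2 xs ys) as [-> ->]; auto.
Qed.
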